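(* Let $\mathcal{G}$ be a hereditary graph family such that $\mathcal{G}_n\neq\emptyset$ for all $n$, let $r\geq 2$ and $0\leq \alpha \leq 1-\frac{1}{r}$. Suppose there is $n_1$ such that $\lambda_{\alpha}(\mathcal{G}_n)> \left(1-\frac{1}{r}\right)n-\left(1-\frac{1}{r}\right)$ for all $n\ge n_1$. Then the limit $$\pi_{\alpha}(\mathcal{G}):=\lim_{n\to \infty} \frac{\lambda_{\alpha}(\mathcal{G}_n)}{n}$$ exists, and $\pi_{\alpha}(\mathcal{G})\leq \frac{\lambda_{\alpha}(\mathcal{G}_n)}{n-1}$ for every $n\ge n_1$.
   Context: $\lambda_\alpha(G)$ is the largest eigenvalue of $A_\alpha(G)=\alpha D(G)+(1-\alpha)A(G)$ ($A$ adjacency matrix, $D$ diagonal degree matrix). A graph family is hereditary if it is closed under taking induced subgraphs. For a family $\mathcal{G}$, $\mathcal{G}_n$ is the set of $n$-vertex graphs in $\mathcal{G}$ and $\lambda_\alpha(\mathcal{G}_n)=\max_{G\in\mathcal{G}_n}\lambda_\alpha(G)$. *)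

From HB Require Import structures.
From mathcomp Require Import all_boot all_order all_algebra.
From mathcomp Require Import all_classical all_reals all_analysis.
Set Implicit Arguments. Unset Strict Implicit. Unset Printing Implicit Defensive.
Import Order.TTheory GRing.Theory Num.Theory.
Local Open Scope ring_scope.
Local Open Scope classical_set_scope.

Definition simple_graph (n : nat) (e : rel 'I_n) : Prop :=
  symmetric e /\ irreflexive e.

Definition graph_family := forall n : nat, rel 'I_n -> Prop.

Definition induced (m n : nat) (e : rel 'I_n) (f : 'I_m -> 'I_n) : rel 'I_m :=
  fun i j => e (f i) (f j).

Definition fam_n (F : graph_family) (n : nat) (e : rel 'I_n) : Prop :=
  simple_graph e /\ F n e.

(* Hereditary: closed under induced subgraphs (an injection 'I_m -> 'I_n
   selects the vertex subset, which also gives closure under relabelling). *)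
Definition hereditary (F : graph_family) : Prop :=
  forall (m n : nat) (f : 'I_m -> 'I_n) (e : rel 'I_n),
    injective f -> fam_n F e -> fam_n F (induced e f).

Definition deg (n : nat) (e : rel 'I_n) (i : 'I_n) : nat := #|[set j | e i j]|.

Definition Aalpha (R : realType) (alpha : R) (n : nat) (e : rel 'I_n) : 'M[R]_n :=
  \matrix_(i, j) (alpha * (i == j)%:R * (deg e i)%:R + (1 - alpha) * (e i j)%:R).

Definition lambda_alpha (R : realType) (alpha : R) (n : nat) (e : rel 'I_n) : R :=
  sup [set l : R | eigenvalue (Aalpha alpha e) l].

Definition lambda_fam (R : realType) (alpha : R) (F : graph_family) (n : nat) : R :=
  sup [set lambda_alpha alpha e | e in [set e : rel 'I_n | fam_n F e]].

(* For an n-vertex graph G, take a unit vector x attaining the maximum of the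
   Rayleigh quotient of the symmetric matrix A_alpha(G); it is an eigenvector
   for lambda_alpha(G).  Each arc term of x A_alpha(G) x^T survives in exactly
   n - 2 of the n vertex-deleted subgraphs G - v, while the squared norms of the
   restrictions of x add up to n - 1; bounding each restricted form by
   lambda_alpha(G - v) <= lambda_alpha(G_(n-1)) gives
   (n - 2) lambda_alpha(G_n) <= (n - 1) lambda_alpha(G_(n-1)).
   So lambda_alpha(G_n) / (n - 1) is nonincreasing and nonnegative, hence
   convergent, and lambda_alpha(G_n) / n has the same limit, a lower bound for
   every lambda_alpha(G_n) / (n - 1).  The lower-bound hypothesis only excludes
   n1 <= 1: a one-vertex graph has lambda_alpha = 0, and at n = 1 the claimed
   bound would read piG <= lambda_alpha(G_1) / 0. *)

From Pilot Require Import Defs.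
From HB Require Import structures.
From mathcomp Require Import all_boot all_order all_algebra.
From mathcomp Require Import all_classical all_reals all_analysis.
From mathcomp Require Import lra.
Set Implicit Arguments. Unset Strict Implicit. Unset Printing Implicit Defensive.
Import Order.TTheory GRing.Theory Num.Theory.
Import numFieldNormedType.Exports.
Local Open Scope ring_scope.
Local Open Scope classical_set_scope.

Section RayleighQuotient.
Variable R : realType.

Definition bform n (A : 'M[R]_n) (x y : 'rV[R]_n) : R := (x *m A *m y^T) 0 0.

Definition sqnorm n (x : 'rV[R]_n) : R := (x *m x^T) 0 0.

Definition max_eigenvalue n (A : 'M[R]_n) : R := sup [set l | eigenvalue A l].

Lemma bformE n (A : 'M[R]_n) x y :
  bform A x y = \sum_i \sum_j x 0 i * A i j * y 0 j.
Proof.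
rewrite /bform mxE exchange_big; apply: eq_bigr => j _.
by rewrite !mxE mulr_suml.
Qed.

Lemma sqnormE n (x : 'rV[R]_n) : sqnorm x = \sum_i x 0 i ^+ 2.
Proof. by rewrite /sqnorm mxE; apply: eq_bigr => i _; rewrite mxE expr2. Qed.

Lemma coord_le_sqnorm n (x : 'rV[R]_n) i : x 0 i ^+ 2 <= sqnorm x.
Proof.
by rewrite sqnormE (bigD1 i) //= lerDl sumr_ge0 // => j _; rewrite sqr_ge0.
Qed.

Lemma sqnorm_ge0 n (x : 'rV[R]_n) : 0 <= sqnorm x.
Proof. by rewrite sqnormE sumr_ge0 // => i _; rewrite sqr_ge0. Qed.

Lemma sqnorm_eq0 n (x : 'rV[R]_n) : (sqnorm x == 0) = (x == 0).
Proof.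
apply/idP/eqP => [|->]; last first.
  by rewrite sqnormE big1 // => i _; rewrite mxE expr2 mul0r.
rewrite sqnormE psumr_eq0 => [/allP x0|i _]; last exact: sqr_ge0.
apply/rowP => i; rewrite !mxE.
by have /implyP/(_ isT) := x0 i (mem_index_enum i); rewrite sqrf_eq0 => /eqP.
Qed.

Lemma sqnormZ n c (x : 'rV[R]_n) : sqnorm (c *: x) = c ^+ 2 * sqnorm x.
Proof. by rewrite /sqnorm linearZ /= -scalemxAl -scalemxAr !mxE mulrA expr2. Qed.

Lemma bformZ n (A : 'M[R]_n) c x : bform A (c *: x) (c *: x) = c ^+ 2 * bform A x x.
Proof.
by rewrite /bform linearZ /= -!scalemxAl -scalemxAr !mxE mulrA expr2.
Qed.

Lemma bformC n (A : 'M[R]_n) x y : A^T = A -> bform A y x = bform A x y.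
Proof.
move=> symA; rewrite /bform; have -> : y *m A *m x^T = (x *m A *m y^T)^T.
  by rewrite !trmx_mul trmxK symA mulmxA.
by rewrite mxE.
Qed.

Lemma bformDZ n (A : 'M[R]_n) x y t :
  bform A (x + t *: y) (x + t *: y) =
  bform A x x + t * (bform A x y + bform A y x) + t ^+ 2 * bform A y y.
Proof.
rewrite /bform linearD linearZ /= !(mulmxDl, mulmxDr) -!scalemxAl -!scalemxAr.
by rewrite !mxE; lra.
Qed.

Lemma bform_subscalar n (A : 'M[R]_n) mu x :
  bform (A - mu%:M) x x = bform A x x - mu * sqnorm x.
Proof.
by rewrite /bform /sqnorm mulmxBr mul_mx_scalar mulmxBl -scalemxAl !mxE.
Qed.

Lemma bform_eigen n (A : 'M[R]_n) l x :
  x *m A = l *: x -> bform A x x = l * sqnorm x.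
Proof. by rewrite /bform => ->; rewrite -scalemxAl mxE. Qed.

Lemma nsd_qform_eq0 n (B : 'M[R]_n) x : B^T = B ->
  (forall y, bform B y y <= 0) -> bform B x x = 0 -> x *m B = 0.
Proof.
(* Along x + t u with u = x B the form is 2 t |u|^2 + t^2 u B u^T; the choice
   t = |u|^2 / (1 - u B u^T) makes it positive unless u = 0. *)
move=> symB nsdB Bx0; set u := x *m B.
have Bxu : bform B x u = sqnorm u by [].
apply/eqP; rewrite -sqnorm_eq0 eq_le sqnorm_ge0 andbT.
set b := sqnorm u in Bxu *; set c := bform B u u.
have c_le0 : c <= 0 := nsdB u.
have := nsdB (x + (b / (1 - c)) *: u).
rewrite bformDZ Bx0 [bform B u x]bformC // Bxu.
set t := b / (1 - c) => form_le0.
have tc : t * (1 - c) = b by rewrite /t divfK // subr_eq0 gt_eqF // (le_lt_trans c_le0).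
have t_ge0 : 0 <= t by rewrite /t divr_ge0 ?sqnorm_ge0 // subr_ge0 (le_trans c_le0).
have tc' : t * c = t - b by rewrite -tc; lra.
have : t ^+ 2 + t * b <= 0.
  by move: form_le0; rewrite expr2 -mulrA tc'; nra.
have b_ge0 : 0 <= b := sqnorm_ge0 u.
rewrite -tc; nra.
Qed.

Lemma continuous_qform n (A : 'M[R]_n) : continuous (fun x => bform A x x).
Proof.
have contM (f g : 'rV[R]_n -> R) : continuous f -> continuous g -> continuous (f \* g).
  by move=> cf cg x; exact: continuousM (cf x) (cg x).
rewrite (_ : (fun x => bform A x x) = fun x => \sum_i \sum_j x 0 i * A i j * x 0 j);
  last by apply: funext => x; rewrite bformE.
apply: continuous_big => [|i _]; first exact: add_continuous.
apply: continuous_big => [|j _]; first exact: add_continuous.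
apply: (contM); last exact: coord_continuous.
by apply: (contM); [exact: coord_continuous | exact: cst_continuous].
Qed.

Lemma compact_unit_sphere n : compact [set x : 'rV[R]_n | sqnorm x = 1].
Proof.
apply: bounded_closed_compact.
  exists 1; split; first by rewrite num_real.
  move=> c c_gt1 x /= x1; rewrite [leLHS]mx_normrE; apply: bigmax_le => [|[i j] _ /=].
    by rewrite (le_trans ler01) // ltW.
  rewrite [i]ord1; apply: le_trans (ltW c_gt1).
  rewrite -(expr_le1 (_ : 0 < 2)%N) ?normr_ge0 //.
  by rewrite real_normK ?num_real // -x1 coord_le_sqnorm.
rewrite (_ : [set x | sqnorm x = 1] = @sqnorm n @^-1` [set 1]) //.
apply: preimage_closed => [y _|]; last exact: closed_eq.
rewrite (_ : @sqnorm n = fun x => bform 1%:M x x); first exact: continuous_qform.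
by apply: funext => x; rewrite /bform mulmx1.
Qed.

Lemma exists_qform_max n (A : 'M[R]_n) : (0 < n)%N ->
  exists2 x : 'rV[R]_n, sqnorm x = 1 &
    forall y, bform A y y <= bform A x x * sqnorm y.
Proof.
move=> n_gt0; set S := [set x : 'rV[R]_n | sqnorm x = 1].
have S_neq0 : S !=set0.
  exists (delta_mx 0 (Ordinal n_gt0)); rewrite /S /= sqnormE (bigD1 (Ordinal n_gt0)) //=.
  rewrite big1 => [|j /negbTE jn]; first by rewrite mxE !eqxx expr1n addr0.
  by rewrite mxE jn andbF expr2 mul0r.
have [x Sx x_max] := EVT_max_rV S_neq0 (@compact_unit_sphere n)
  (continuous_subspaceT (@continuous_qform n A)).
rewrite inE in Sx; exists x => // y.
have [/eqP|y_neq0] := eqVneq (sqnorm y) 0.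
  rewrite sqnorm_eq0 => /eqP ->; rewrite -[0 : 'rV_n](scale0r 0) bformZ sqnormZ.
  by rewrite expr0n /= !mul0r mulr0.
have y_gt0 : 0 < sqnorm y by rewrite lt_def y_neq0 sqnorm_ge0.
have := x_max ((Num.sqrt (sqnorm y))^-1 *: y).
rewrite !inE /S /= sqnormZ bformZ exprVn sqr_sqrtr ?sqnorm_ge0 // mulVf //.
by move=> /(_ erefl); rewrite -ler_pdivrMr // mulrC.
Qed.

Lemma qform_max_eigenvector n (A : 'M[R]_n) x : A^T = A ->
  (forall y, bform A y y <= bform A x x * sqnorm y) -> sqnorm x = 1 ->
  x *m A = bform A x x *: x.
Proof.
move=> symA x_max x1.
apply/eqP; rewrite -subr_eq0 -mul_mx_scalar -mulmxBr; apply/eqP.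
apply: nsd_qform_eq0 => [|y|].
- by rewrite linearB /= symA tr_scalar_mx.
- by rewrite bform_subscalar subr_le0; exact: x_max.
- by rewrite bform_subscalar x1 mulr1 subrr.
Qed.

Lemma eigenvalue_le_qform_bound n (A : 'M[R]_n) c l :
  (forall y, bform A y y <= c * sqnorm y) -> eigenvalue A l -> l <= c.
Proof.
move=> A_bound /eigenvalueP [v vA v_neq0].
have v_gt0 : 0 < sqnorm v by rewrite lt_def sqnorm_eq0 v_neq0 sqnorm_ge0.
by rewrite -(ler_pM2r v_gt0) -(bform_eigen vA).
Qed.

Lemma max_eigenvalue_rayleigh n (A : 'M[R]_n) : (0 < n)%N -> A^T = A ->
  exists2 x : 'rV[R]_n, sqnorm x = 1 &
    max_eigenvalue A = bform A x x /\
    forall y, bform A y y <= bform A x x * sqnorm y.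
Proof.
move=> n_gt0 symA; have [x x1 x_max] := exists_qform_max A n_gt0.
exists x => //; split => //.
have x_eig : eigenvalue A (bform A x x).
  apply/eigenvalueP; exists x; first exact: qform_max_eigenvector.
  by rewrite -sqnorm_eq0 x1 oner_neq0.
apply/le_anti/andP; split.
  apply: ge_sup => [|l]; first by exists (bform A x x).
  exact: eigenvalue_le_qform_bound.
apply: sup_upper_bound => //; split; first by exists (bform A x x).
by exists (bform A x x) => l; apply: eigenvalue_le_qform_bound.
Qed.

Lemma qform_le_max_eigenvalue n (A : 'M[R]_n) y : (0 < n)%N -> A^T = A ->
  bform A y y <= max_eigenvalue A * sqnorm y.
Proof.
by move=> n_gt0 symA; have [x _ [-> x_max]] := max_eigenvalue_rayleigh n_gt0 symA.
Qed.

End RayleighQuotient.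

Section AlphaAdjacency.
Variables (R : realType) (alpha : R).

Lemma Aalpha_tr n (e : rel 'I_n) : symmetric e -> (Aalpha alpha e)^T = Aalpha alpha e.
Proof.
move=> e_sym; apply/matrixP => i j; rewrite !mxE.
by have [->|_] := eqVneq i j => //; rewrite e_sym !mulr0 !mul0r.
Qed.

Lemma degE n (e : rel 'I_n) i : (deg e i)%:R = \sum_j ((e i j)%:R : R).
Proof.
rewrite /deg -sum1_card natr_sum big_mkcond /=.
by apply: eq_bigr => j _; rewrite unfold_in /= asboolb; case: (e i j).
Qed.

Lemma lambda_alphaE n (e : rel 'I_n) :
  lambda_alpha alpha e = max_eigenvalue (Aalpha alpha e).
Proof. by []. Qed.

(* The diagonal part alpha d_i x_i^2 of the form is spread over the arcs leaving i. *)
Definition arc_term n (e : rel 'I_n) (x : 'rV[R]_n) i j : R :=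
  (e i j)%:R * (alpha * x 0 i ^+ 2 + (1 - alpha) * (x 0 i * x 0 j)).

Lemma qform_Aalpha n (e : rel 'I_n) x :
  bform (Aalpha alpha e) x x = \sum_i \sum_j arc_term e x i j.
Proof.
rewrite bformE; apply: eq_bigr => i _.
have diag : \sum_j x 0 i * (alpha * (i == j)%:R * (deg e i)%:R) * x 0 j =
    alpha * (deg e i)%:R * x 0 i ^+ 2.
  rewrite (bigD1 i) //= eqxx big1 => [|j /negbTE ji]; first by rewrite addr0 mulr1n; lra.
  by rewrite eq_sym ji !(mulr0, mul0r).
transitivity (\sum_j (x 0 i * (alpha * (i == j)%:R * (deg e i)%:R) * x 0 j +
    (1 - alpha) * (e i j)%:R * (x 0 i * x 0 j))).
  by apply: eq_bigr => j _; rewrite mxE; lra.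
rewrite big_split /= diag degE /arc_term mulr_sumr mulr_suml -big_split /=.
by apply: eq_bigr => j _; lra.
Qed.

Lemma sum_lift m (f : 'I_m.+1 -> R) (w : 'I_m.+1) :
  \sum_(k < m) f (lift w k) = \sum_i f i - f w.
Proof. by rewrite [in RHS](bigD1_ord w) //= addrC addrK. Qed.

Lemma qform_Aalpha_induced m (e : rel 'I_m.+1) (x : 'rV[R]_m.+1) (w : 'I_m.+1) :
  bform (Aalpha alpha (Defs.induced e (lift w))) (col' w x) (col' w x) =
  \sum_i \sum_j arc_term e x i j - \sum_i arc_term e x i w - \sum_j arc_term e x w j
    + arc_term e x w w.
Proof.
rewrite qform_Aalpha.
under eq_bigr => k _ do under eq_bigr => l _ do rewrite /arc_term !mxE.
under eq_bigr => k _ do rewrite (sum_lift (arc_term e x (lift w k))).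
by rewrite (sum_lift (fun i => \sum_j arc_term e x i j - arc_term e x i w)) sumrB; lra.
Qed.

Lemma sum_qform_Aalpha_induced m (e : rel 'I_m.+2) (x : 'rV[R]_m.+2) :
  irreflexive e ->
  \sum_w bform (Aalpha alpha (Defs.induced e (lift w))) (col' w x) (col' w x) =
  m%:R * bform (Aalpha alpha e) x x.
Proof.
move=> e_irr; under eq_bigr => w _ do rewrite qform_Aalpha_induced.
rewrite !big_split /= !sumrN sumr_const card_ord qform_Aalpha.
rewrite [\sum_w \sum_i arc_term e x i w]exchange_big /=.
rewrite [\sum_w arc_term e x w w]big1 => [|i _]; last by rewrite /arc_term e_irr mul0r.
rewrite !mulrS -mulr_natl; lra.
Qed.

Lemma sum_sqnorm_col' m (x : 'rV[R]_m.+1) :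
  \sum_w sqnorm (col' w x) = m%:R * sqnorm x.
Proof.
have sqnorm_col' w : sqnorm (col' w x) = sqnorm x - x 0 w ^+ 2.
  by rewrite !sqnormE -sum_lift; apply: eq_bigr => k _; rewrite mxE.
under eq_bigr do rewrite sqnorm_col'.
by rewrite sumrB sumr_const card_ord -sqnormE mulrSr addrK mulr_natl.
Qed.

Lemma lambda_alpha_vertex_deletion m (e : rel 'I_m.+2) L : simple_graph e ->
  (forall w, lambda_alpha alpha (Defs.induced e (lift w)) <= L) ->
  m%:R * lambda_alpha alpha e <= m.+1%:R * L.
Proof.
move=> [e_sym e_irr] L_ub.
have [x x1 [lambda_x _]] := max_eigenvalue_rayleigh (ltn0Sn _) (Aalpha_tr e_sym).
rewrite lambda_alphaE lambda_x -sum_qform_Aalpha_induced //.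
have sym_del w : symmetric (Defs.induced e (lift w)).
  by move=> k l; rewrite /Defs.induced e_sym.
apply: le_trans (_ : \sum_w L * sqnorm (col' w x) <= _).
  apply: ler_sum => w _.
  apply: le_trans (qform_le_max_eigenvalue _ (ltn0Sn _) (Aalpha_tr (sym_del w))) _.
  by apply: ler_wpM2r; [exact: sqnorm_ge0 | exact: L_ub].
by rewrite -mulr_sumr sum_sqnorm_col' x1 mulr1 mulrC.
Qed.

Lemma lambda_alpha_ge0 n (e : rel 'I_n) : (0 < n)%N -> simple_graph e ->
  0 <= lambda_alpha alpha e.
Proof.
move=> n_gt0 [e_sym _]; set one : 'rV[R]_n := const_mx 1.
have Q1_ge0 : 0 <= bform (Aalpha alpha e) one one.
  rewrite qform_Aalpha sumr_ge0 // => i _; rewrite sumr_ge0 // => j _.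
  by rewrite /arc_term !mxE expr1n !mulr1 subrKC mulr1 ler0n.
have one_n : sqnorm one = n%:R.
  rewrite sqnormE (eq_bigr (fun=> 1)) ?sumr_const ?card_ord // => i _.
  by rewrite mxE expr1n.
have := le_trans Q1_ge0 (qform_le_max_eigenvalue one n_gt0 (Aalpha_tr e_sym)).
by rewrite one_n pmulr_lge0 ?ltr0n.
Qed.

Lemma lambda_alpha_le_sqr n (e : rel 'I_n) : (0 < n)%N -> simple_graph e ->
  0 <= alpha <= 1 -> lambda_alpha alpha e <= n%:R ^+ 2.
Proof.
move=> n_gt0 [e_sym _] /andP[alpha_ge0 alpha_le1]; rewrite lambda_alphaE.
have [x x1 [-> _]] := max_eigenvalue_rayleigh n_gt0 (Aalpha_tr e_sym).
rewrite qform_Aalpha.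
have -> : n%:R ^+ 2 = \sum_(i < n) \sum_(j < n) (1 : R).
  under eq_bigr do rewrite sumr_const card_ord.
  by rewrite sumr_const card_ord expr2 mulr_natr.
apply: ler_sum => i _; apply: ler_sum => j _.
have := coord_le_sqnorm x i; have := coord_le_sqnorm x j; rewrite x1 /arc_term.
move: (x 0 i) (x 0 j) => a b b_le1 a_le1.
have ab_le1 : a * b <= 1 by nra.
by case: (e i j) => /=; nra.
Qed.

Lemma lambda_alpha_ord1 (e : rel 'I_1) : simple_graph e -> lambda_alpha alpha e = 0.
Proof.
move=> [e_sym e_irr]; rewrite lambda_alphaE.
have [x _ [-> _]] := max_eigenvalue_rayleigh (ltn0Sn 0) (Aalpha_tr e_sym).
rewrite qform_Aalpha big1 // => i _; rewrite big1 // => j _.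
by rewrite /arc_term (ord1 i) (ord1 j) e_irr mul0r.
Qed.

End AlphaAdjacency.

Section GraphFamily.
Variables (R : realType) (alpha : R) (F : graph_family).
Hypothesis alpha_01 : 0 <= alpha <= 1.
Hypothesis F_nonempty : forall n, exists e : rel 'I_n, fam_n F e.

Lemma lambda_fam_le n L :
  (forall e : rel 'I_n, fam_n F e -> lambda_alpha alpha e <= L) ->
  lambda_fam alpha F n <= L.
Proof.
have [e Fe] := F_nonempty n; move=> L_ub.
apply: ge_sup => [|_ [e' Fe' <-]]; last exact: L_ub.
by exists (lambda_alpha alpha e), e.
Qed.

Lemma lambda_alpha_le_fam n (e : rel 'I_n) : (0 < n)%N -> fam_n F e ->
  lambda_alpha alpha e <= lambda_fam alpha F n.
Proof.
move=> n_gt0 Fe; apply: sup_upper_bound; last by exists e.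
split; first by exists (lambda_alpha alpha e), e.
by exists (n%:R ^+ 2) => _ [e' [e'_simple _] <-]; exact: lambda_alpha_le_sqr.
Qed.

Lemma lambda_fam_ge0 n : (0 < n)%N -> 0 <= lambda_fam alpha F n.
Proof.
move=> n_gt0; have [e Fe] := F_nonempty n.
exact: le_trans (lambda_alpha_ge0 _ n_gt0 Fe.1) (lambda_alpha_le_fam n_gt0 Fe).
Qed.

Lemma lambda_fam_step m : hereditary F -> (0 < m)%N ->
  m%:R * lambda_fam alpha F m.+2 <= m.+1%:R * lambda_fam alpha F m.+1.
Proof.
move=> F_her m_gt0; have m_pos : 0 < m%:R :> R by rewrite ltr0n.
rewrite mulrC -ler_pdivlMr //; apply: lambda_fam_le => e Fe.
rewrite ler_pdivlMr // mulrC.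
apply: lambda_alpha_vertex_deletion => [|w]; first exact: Fe.1.
exact: lambda_alpha_le_fam (ltn0Sn _) (F_her _ _ _ _ (@lift_inj _ w) Fe).
Qed.

Lemma lambda_fam1 : lambda_fam alpha F 1 = 0.
Proof.
apply/le_anti; rewrite lambda_fam_ge0 // andbT.
by apply: lambda_fam_le => e Fe; rewrite lambda_alpha_ord1 //; exact: Fe.1.
Qed.

End GraphFamily.

Lemma nonincreasing_ratio_cvg (R : realType) (u : R ^nat) :
  (forall k, 0 <= u k.+2) ->
  (forall k, k.+1%:R * u k.+3 <= k.+2%:R * u k.+2) ->
  exists p : R, (fun n => u n / n%:R) @ \oo --> p /\
    forall n, (2 <= n)%N -> p <= u n / (n%:R - 1).
Proof.
move=> u_ge0 u_step; pose a k := u k.+2 / k.+1%:R.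
have a_noninc : nonincreasing_seq a.
  apply/nonincreasing_seqP => k; rewrite /a ler_pdivrMr // mulrAC ler_pdivlMr //.
  by rewrite mulrC [X in _ <= X]mulrC u_step.
have a_cvg : cvgn a.
  apply: nonincreasing_is_cvgn a_noninc _.
  by exists 0 => _ [k _ <-]; rewrite divr_ge0.
exists (limn a); split; last first.
  case=> [|[|k]] // _; rewrite -natr1 addrK.
  exact: nonincreasing_cvgn_ge a_noninc a_cvg k.
rewrite -(cvg_shiftn 2).
have -> : [sequence u (n + 2)%N / (n + 2)%N%:R]_n = a \* (fun n => 1 - harmonic n.+1).
  apply: funext => n /=; rewrite /a /harmonic /= addn2.
  have n2_neq0 : n.+2%:R != 0 :> R by rewrite pnatr_eq0.
  rewrite -[X in X - _](divff n2_neq0) -[X in _ - X]mul1r -mulrBl.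
  by rewrite -[n.+2]addn1 natrD addrK mulrA divfK.
have -> : limn a = limn a * (1 - 0) by rewrite subr0 mulr1.
apply: cvgM => //; apply: cvgB; first exact: cvg_cst.
have := @cvg_harmonic R; rewrite -(cvg_shiftn 1).
by under eq_fun do rewrite addn1.
Qed.

Unset Implicit Arguments.

Theorem lemma3p4 (R : realType) (F : graph_family) (r : nat) (alpha : R) (n1 : nat) :
  hereditary F ->
  (forall n : nat, exists e : rel 'I_n, fam_n F e) ->
  (2 <= r)%N ->
  0 <= alpha -> alpha <= 1 - r%:R^-1 ->
  (forall n : nat, (n1 <= n)%N -> (0 < n)%N ->
     lambda_fam alpha F n > (1 - r%:R^-1) * n%:R - (1 - r%:R^-1)) ->
  exists piG : R,
    ((fun n : nat => lambda_fam alpha F n / n%:R) @ \oo --> piG) /\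
    (forall n : nat, (n1 <= n)%N -> (0 < n)%N ->
       piG <= lambda_fam alpha F n / (n%:R - 1)).
Proof.
move=> F_her F_nonempty _ alpha_ge0 alpha_le lambda_lb.
have alpha_01 : 0 <= alpha <= 1.
  by rewrite alpha_ge0 (le_trans alpha_le) // gerBl invr_ge0 ler0n.
have n1_ge2 : (2 <= n1)%N.
  rewrite leqNgt; apply/negP => n1_le1.
  by have := lambda_lb 1%N n1_le1 isT; rewrite lambda_fam1 // mulr1 subrr ltxx.
have [p [p_lim p_le]] := nonincreasing_ratio_cvg
  (fun k => lambda_fam_ge0 alpha_01 F_nonempty (ltn0Sn k.+1))
  (fun k => lambda_fam_step alpha_01 F_nonempty F_her (ltn0Sn k)).
by exists p; split => // n n1_le_n _; apply: p_le; exact: leq_trans n1_le_n.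
Qed.
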